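(* Let $a_{n,k}$ be the number of matchings of size $n$ with exactly $k$ occurrences of the endhered pattern $21$. For every fixed $k\ge0$, as $n\to\infty$, $$\frac{a_{n,k}}{a_{n,k+1}}\to 2(k+1).$$
   Context: A matching of size $n$ is a set of $n$ arcs $(a,b)$ with $1\le a<b\le 2n$ such that each point of $\{1,\dots,2n\}$ belongs to exactly one arc. An occurrence of the endhered pattern $21$ in a matching is a pair of arcs of the form $(i+1,j+2),(i+2,j+1)$ (two nested arcs with consecutive starting points and consecutive ending points); the number of occurrences is the number of such pairs. *)

From mathcomp Require Import all_boot.
From Stdlib Require Import Reals.

Set Implicit Arguments.
Unset Strict Implicit.
Unset Printing Implicit Defensive.

(* Points are labelled 0, ..., 2n-1 (the paper's 1..2n shifted by one). *)
Definition arc n := ('I_(2 * n) * 'I_(2 * n))%type.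

Definition is_matching n (M : {set arc n}) : bool :=
  [forall p in M, (p.1 < p.2)%N] &&
  [forall x : 'I_(2 * n), #|[set p in M | (p.1 == x) || (p.2 == x)]| == 1%N].

Definition has_arc n (M : {set arc n}) (a b : nat) : bool :=
  [exists p in M, (nat_of_ord p.1 == a) && (nat_of_ord p.2 == b)].

(* occurrences of the endhered pattern 21: pairs of arcs (i+1, j+2), (i+2, j+1)
   in the paper's labelling, i.e. (i, j+1), (i+1, j) in ours; an occurrence is
   determined by the pair (i, j). *)
Definition occ21 n (M : {set arc n}) : nat :=
  #|[set q : 'I_(2 * n) * 'I_(2 * n) |
      has_arc M q.1 q.2.+1 && has_arc M q.1.+1 q.2]|.

Definition a_nk (n k : nat) : nat :=
  #|[set M : {set arc n} | is_matching M && (occ21 M == k)]|.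

(* If (x, y) is an arc of a matching, inserting the arc (x+1, y+1) just inside
   it creates exactly one new occurrence of 21 (the pair of these two arcs) and
   keeps all the others; deleting the inner arc of an occurrence undoes this.
   Double counting gives (k+1) a(m+2, k+1) = (m+1) a(m+1, k), hence
   a(j+k, k) = C(j+k-1, k) d(j) with d(j) = a(j, 0).  Summing over k, the
   (2m+1)!! matchings of size m+1 satisfy (2m+1)!! = sum_j C(m, j) d(j+1), and
   comparing binomial transforms gives d(p+2) = (2p+2) d(p+1) + 2p d(p), so
   2(p+1) <= d(p+2)/d(p+1) <= 2p+3.  For n = p+k+2 the ratio a(n,k)/a(n,k+1)
   is (k+1)/(p+1) * d(p+2)/d(p+1), squeezed between 2(k+1) and
   2(k+1) + (k+1)/(p+1). *)

From Pilot Require Import Defs.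
From mathcomp Require Import all_boot zify.
From Stdlib Require Import Reals Lra.

Set Implicit Arguments.
Unset Strict Implicit.
Unset Printing Implicit Defensive.

(* [path] exports another [arc]. *)
Local Notation arc := Defs.arc.

Section ArcRelation.
Variable n : nat.
Implicit Types M : {set arc n}.

Lemma arc_eq (p q : arc n) : (p.1 : nat) = q.1 -> (p.2 : nat) = q.2 -> p = q.
Proof. by case: p q => p1 p2 [q1 q2] /= e1 e2; congr pair; apply: val_inj. Qed.

Lemma has_arc_mem M (p : arc n) : has_arc M p.1 p.2 = (p \in M).
Proof.
apply/existsP/idP => [[q /andP[qM /andP[/eqP e1 /eqP e2]]]|pM]; last first.
  by exists p; rewrite pM !eqxx.
by rewrite -(arc_eq e1 e2).
Qed.

Lemma has_arcP M a b :
  reflect (exists2 p, p \in M & (p.1 : nat) = a /\ (p.2 : nat) = b) (has_arc M a b).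
Proof.
apply: (iffP existsP) => [[p /andP[pM /andP[/eqP e1 /eqP e2]]]|[p pM [e1 e2]]].
  by exists p.
by exists p; rewrite pM e1 e2 !eqxx.
Qed.

Lemma has_arc_lt M a b : has_arc M a b -> a < 2 * n /\ b < 2 * n.
Proof. by case/has_arcP => p _ [<- <-]. Qed.

Lemma has_arc_set (R : nat -> nat -> bool) a b :
  has_arc [set p : arc n | R p.1 p.2] a b = [&& R a b, a < 2 * n & b < 2 * n].
Proof.
apply/has_arcP/and3P => [[p] | [Rab ha hb]].
  by rewrite inE => Rp [<- <-].
by exists (Ordinal ha, Ordinal hb); rewrite ?inE.
Qed.

Lemma eq_arc_set M1 M2 : has_arc M1 =2 has_arc M2 -> M1 = M2.
Proof. by move=> eqM; apply/setP => p; rewrite -!has_arc_mem eqM. Qed.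

End ArcRelation.

(* Matchings as relations on nat: inserting and deleting points is then a mere
   relabelling, with no dependent ordinal types involved. *)
Record matching_rel (n : nat) (R : nat -> nat -> bool) : Prop := MatchingRel {
  rel_lt : forall a b, R a b -> a < b < 2 * n;
  rel_cover : forall x, x < 2 * n -> exists y, R x y || R y x;
  rel_uniql : forall x y z, R x y -> R x z -> y = z;
  rel_uniqr : forall x y z, R y x -> R z x -> y = z;
  rel_disj : forall x y z, R x y -> R z x -> False
}.

Section MatchingRel.
Variables (n : nat) (M : {set arc n}).

Lemma is_matching_rel : is_matching M -> matching_rel n (has_arc M).
Proof.
case/andP => /forall_inP Mlt /forallP Mcard.
have Mpt (x : 'I_(2 * n)) : exists2 p, p \in M & (p.1 == x) || (p.2 == x).
  have /cards1P [p Ex] := Mcard x.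
  by have := set11 p; rewrite -Ex inE => /andP[]; exists p.
have uniq_at p q x : p \in M -> q \in M -> x < 2 * n ->
    (p.1 == x :> nat) || (p.2 == x :> nat) -> (q.1 == x :> nat) || (q.2 == x :> nat) -> p = q.
  move=> pM qM hx px qx; have /cards1P [p0 Ex] := Mcard (Ordinal hx).
  have : p \in [set p in M | (p.1 == Ordinal hx) || (p.2 == Ordinal hx)] by rewrite inE pM.
  have : q \in [set p in M | (p.1 == Ordinal hx) || (p.2 == Ordinal hx)] by rewrite inE qM.
  by rewrite Ex !inE => /eqP -> /eqP ->.
split.
- by move=> a b /has_arcP [p pM [<- <-]]; rewrite (Mlt p pM) ltn_ord.
- move=> x hx; have [p pM /orP[] /eqP px] := Mpt (Ordinal hx).
  + by exists p.2; apply/orP; left; apply/has_arcP; exists p; rewrite ?px.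
  + by exists p.1; apply/orP; right; apply/has_arcP; exists p; rewrite ?px.
- move=> x y z /has_arcP [p pM [px <-]] /has_arcP [q qM [qx <-]].
  have hx : x < 2 * n by rewrite -px.
  by rewrite (uniq_at p q x) // ?px ?qx ?eqxx.
- move=> x y z /has_arcP [p pM [<- px]] /has_arcP [q qM [<- qx]].
  have hx : x < 2 * n by rewrite -px.
  by rewrite (uniq_at p q x) // ?px ?qx ?eqxx ?orbT.
- move=> x y z /has_arcP [p pM [px _]] /has_arcP [q qM [_ qx]].
  have hx : x < 2 * n by rewrite -px.
  have pq : p = q by apply: (uniq_at p q x); rewrite // ?px ?qx ?eqxx ?orbT.
  by move: (Mlt q qM) qx; rewrite -pq px; lia.
Qed.

Lemma rel_is_matching : matching_rel n (has_arc M) -> is_matching M.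
Proof.
case=> Mlt Mcover Muniql Muniqr Mdisj.
have Marc p : p \in M -> has_arc M p.1 p.2 by rewrite has_arc_mem.
have touch_uniq p q (x : 'I_(2 * n)) : p \in M -> q \in M ->
    (p.1 == x) || (p.2 == x) -> (q.1 == x) || (q.2 == x) -> p = q.
  move=> /Marc pM /Marc qM /orP[] /eqP <- /orP[] /eqP qx.
  - by apply: arc_eq; [rewrite qx | apply: Muniql pM _; rewrite -qx].
  - by case: (Mdisj _ _ q.1 pM); rewrite -qx.
  - by case: (Mdisj _ _ p.1 qM); rewrite qx.
  - by apply: arc_eq; [apply: Muniqr pM _; rewrite -qx | rewrite qx].
apply/andP; split.
  by apply/forall_inP => p /Marc /Mlt /andP[].
apply/forallP => x; apply/cards1P.
have [p pM px] : exists2 p, p \in M & (p.1 == x) || (p.2 == x).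
  have [y /orP[] /has_arcP [p pM [p1 p2]]] := Mcover x (ltn_ord x); exists p => //.
    by rewrite -val_eqE /= p1 eqxx.
  by rewrite -[p.2 == x]val_eqE /= p2 eqxx orbT.
exists p; apply/setP => q; rewrite !inE.
by apply/andP/eqP => [[qM qx]|->]; [apply: touch_uniq qM pM qx px | split].
Qed.

Lemma is_matchingP : is_matching M <-> matching_rel n (has_arc M).
Proof. by split; [apply: is_matching_rel | apply: rel_is_matching]. Qed.

End MatchingRel.

(* Relabelling of the old points when new points are inserted at s < t. *)
Definition bump2 (s t u : nat) := bump t (bump s u).
Definition unbump2 (s t a : nat) := unbump s (unbump t a).

Section Bump2.
Variables s t : nat.
Hypothesis lt_st : s < t.

Lemma bump2_neqs u : bump2 s t u <> s.
Proof. rewrite /bump2 /bump; case: (leqP s u); case: leqP => /=; lia. Qed.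

Lemma bump2_neqt u : bump2 s t u <> t.
Proof. rewrite /bump2 /bump; case: (leqP s u); case: leqP => /=; lia. Qed.

Lemma ltn_bump2 u v : (bump2 s t u < bump2 s t v) = (u < v).
Proof.
rewrite /bump2 /bump; case: (leqP s u); case: (leqP s v) => /=;
  case: (leqP t (_ + u)); case: (leqP t (_ + v)) => /=; lia.
Qed.

Lemma bump2_inj : injective (bump2 s t).
Proof. by move=> u v e; have := ltn_bump2 u v; have := ltn_bump2 v u; rewrite e ltnn; lia. Qed.

Lemma bump2K : cancel (bump2 s t) (unbump2 s t).
Proof.
move=> u; rewrite /bump2 /unbump2 /bump /unbump.
case: (leqP s u) => /=; case: (leqP t _) => /=; case: (ltnP t _) => /=;
  case: (ltnP s _) => /=; lia.
Qed.

Lemma unbump2K a : a <> s -> a <> t -> bump2 s t (unbump2 s t a) = a.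
Proof.
rewrite /bump2 /unbump2 /bump /unbump => neq_as neq_at.
case: (ltnP t a) => /=; case: (ltnP s _) => /=; case: (leqP s _) => /=;
  case: (leqP t _) => /=; lia.
Qed.

Lemma bump2_ltn m u : t < m.+2 -> (bump2 s t u < m.+2) = (u < m).
Proof. by rewrite /bump2 /bump => ?; case: (leqP s u); case: (leqP t _) => /=; lia. Qed.

Lemma leq_bump2 u : u <= bump2 s t u.
Proof. by rewrite /bump2 /bump; case: (leqP s u); case: (leqP t _) => /=; lia. Qed.

End Bump2.

Definition ins_arc_rel n (M : {set arc n}) s t (a b : nat) :=
  ((a == s) && (b == t)) ||
  [&& a != s, a != t, b != s, b != t & has_arc M (unbump2 s t a) (unbump2 s t b)].

Definition ins_arc n (M : {set arc n}) s t : {set arc n.+1} :=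
  [set p : arc n.+1 | ins_arc_rel M s t p.1 p.2].

Definition del_arc_rel n (M : {set arc n.+1}) s t (a b : nat) :=
  has_arc M (bump2 s t a) (bump2 s t b).

Definition del_arc n (M : {set arc n.+1}) s t : {set arc n} :=
  [set p : arc n | del_arc_rel M s t p.1 p.2].

Section InsDelArc.
Variables (n s t : nat).
Hypotheses (lt_st : s < t) (t_lt : t < 2 * n.+1).

Let bump2_lt u : (bump2 s t u < 2 * n.+1) = (u < 2 * n).
Proof. by rewrite (_ : 2 * n.+1 = (2 * n).+2) ?bump2_ltn //; lia. Qed.

Lemma ins_arcP (M : {set arc n}) a b :
  has_arc (ins_arc M s t) a b <->
  (a = s /\ b = t) \/ exists u v, [/\ a = bump2 s t u, b = bump2 s t v & has_arc M u v].
Proof.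
rewrite has_arc_set /ins_arc_rel; split.
- case/and3P => /orP [/andP [/eqP -> /eqP ->]|/and5P [/eqP ? /eqP ? /eqP ? /eqP ? Mab]] _ _.
    by left.
  by right; exists (unbump2 s t a), (unbump2 s t b); rewrite !unbump2K.
- case=> [[-> ->]|[u [v [-> -> Muv]]]]; first by rewrite !eqxx /=; apply/andP; split; lia.
  have [hu hv] := has_arc_lt Muv.
  rewrite !bump2_lt hu hv !bump2K // Muv !andbT; apply/orP; right.
  by apply/and4P; split; apply/eqP; [apply: bump2_neqs|apply: bump2_neqt|
                                     apply: bump2_neqs|apply: bump2_neqt].
Qed.

Lemma has_arc_ins_bump2 (M : {set arc n}) u v :
  has_arc (ins_arc M s t) (bump2 s t u) (bump2 s t v) = has_arc M u v.
Proof.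
apply/idP/idP => [/ins_arcP [[e _]|[u' [v' [/(bump2_inj lt_st)-> /(bump2_inj lt_st)-> //]]]]|Muv].
  by case: (bump2_neqs lt_st e).
by apply/ins_arcP; right; exists u, v.
Qed.

Lemma has_arc_del (M : {set arc n.+1}) u v :
  has_arc (del_arc M s t) u v = has_arc M (bump2 s t u) (bump2 s t v).
Proof.
rewrite has_arc_set /del_arc_rel.
by case Mb: (has_arc M _ _) => //=; have [] := has_arc_lt Mb; rewrite !bump2_lt => -> ->.
Qed.

Lemma ins_arc_matching (M : {set arc n}) :
  matching_rel n (has_arc M) -> matching_rel n.+1 (has_arc (ins_arc M s t)).
Proof.
case=> Mlt Mcover Muniql Muniqr Mdisj.
have neqs := bump2_neqs lt_st; have neqt := bump2_neqt lt_st; have inj := bump2_inj lt_st.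
split.
- move=> a b /ins_arcP [[-> ->]|[u [v [-> -> /Mlt /andP[uv vN]]]]]; first by rewrite lt_st.
  by rewrite ltn_bump2 // uv bump2_lt.
- move=> x hx; case: (x =P s) => [->|xs].
    by exists t; apply/orP; left; apply/ins_arcP; left.
  case: (x =P t) => [->|xt].
    by exists s; apply/orP; right; apply/ins_arcP; left.
  have ex : bump2 s t (unbump2 s t x) = x by rewrite unbump2K.
  have [|w /orP [Mw|Mw]] := Mcover (unbump2 s t x); first by rewrite -bump2_lt ex.
  + by exists (bump2 s t w); apply/orP; left; apply/ins_arcP; right; exists (unbump2 s t x), w.
  + by exists (bump2 s t w); apply/orP; right; apply/ins_arcP; right; exists w, (unbump2 s t x).
- move=> x y z /ins_arcP [[-> ->]|[u [v [-> -> Muv]]]] /ins_arcP [[e ->]|[u' [v' [e -> Muv']]]] //.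
  + by case: (neqs _ (esym e)).
  + by case: (neqs _ e).
  + by move/inj: e Muv' => <- /(Muniql _ _ _ Muv) ->.
- move=> x y z /ins_arcP [[-> ->]|[u [v [-> -> Muv]]]] /ins_arcP [[-> e]|[u' [v' [-> e Muv']]]] //.
  + by case: (neqt _ (esym e)).
  + by case: (neqt _ e).
  + by move/inj: e Muv' => <- /(Muniqr _ _ _ Muv) ->.
- move=> x y z /ins_arcP [[-> _]|[u [v [-> _ Muv]]]] /ins_arcP [[_ e2]|[u' [v' [_ e2 Muv']]]].
  + by move: lt_st; rewrite e2 ltnn.
  + by case: (neqs _ (esym e2)).
  + by case: (neqt _ e2).
  + by move/inj: e2 Muv' => <- /(Mdisj _ _ _ Muv).
Qed.

Lemma del_arc_matching (M : {set arc n.+1}) :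
  matching_rel n.+1 (has_arc M) -> has_arc M s t ->
  matching_rel n (has_arc (del_arc M s t)).
Proof.
case=> Mlt Mcover Muniql Muniqr Mdisj Mst.
split.
- by move=> a b; rewrite has_arc_del -(ltn_bump2 lt_st) -bump2_lt; apply: Mlt.
- move=> x hx; have [|w Mw] := Mcover (bump2 s t x); first by rewrite bump2_lt.
  have ws : w <> s.
    move=> ews; subst w; case/orP: Mw => [/(Mdisj _ _ _ Mst)//|Mw].
    exact: (bump2_neqt lt_st (Muniql _ _ _ Mw Mst)).
  have wt : w <> t.
    move=> ewt; subst w; case/orP: Mw => [Mw|/Mdisj/(_ Mst)//].
    exact: (bump2_neqs lt_st (Muniqr _ _ _ Mw Mst)).
  by exists (unbump2 s t w); rewrite !has_arc_del unbump2K.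
- move=> x y z; rewrite !has_arc_del => Mxy Mxz.
  by apply: (bump2_inj lt_st); apply: Muniql Mxy Mxz.
- move=> x y z; rewrite !has_arc_del => Myx Mzx.
  by apply: (bump2_inj lt_st); apply: Muniqr Myx Mzx.
- by move=> x y z; rewrite !has_arc_del; apply: Mdisj.
Qed.

Lemma del_ins_arc (M : {set arc n}) : del_arc (ins_arc M s t) s t = M.
Proof. by apply: eq_arc_set => a b; rewrite has_arc_del has_arc_ins_bump2. Qed.

Lemma ins_del_arc (M : {set arc n.+1}) :
  matching_rel n.+1 (has_arc M) -> has_arc M s t -> ins_arc (del_arc M s t) s t = M.
Proof.
case=> _ _ Muniql Muniqr Mdisj Mst; apply: eq_arc_set => a b; apply/idP/idP.
  by case/ins_arcP => [[-> ->]|[u [v [-> -> Muv]]]] //; rewrite -has_arc_del.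
move=> Mab; apply/ins_arcP; case: (a =P s) => [eas|neq_as].
  by left; subst a; split => //; apply: Muniql Mab Mst.
have neq_at : a <> t by move=> eat; subst a; apply: Mdisj Mab Mst.
have neq_bs : b <> s by move=> ebs; subst b; apply: Mdisj Mst Mab.
have neq_bt : b <> t by move=> ebt; subst b; exact: neq_as (Muniqr _ _ _ Mab Mst).
by right; exists (unbump2 s t a), (unbump2 s t b); rewrite has_arc_del !unbump2K.
Qed.

End InsDelArc.

Lemma card_in_bij (T1 T2 : finType) (A : {set T1}) (B : {set T2}) f g :
  {in A, forall x, f x \in B} -> {in B, forall y, g y \in A} ->
  {in A, cancel f g} -> {in B, cancel g f} -> #|A| = #|B|.
Proof.
move=> fAB gBA fK gK; rewrite -(card_in_imset (can_in_inj fK)).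
apply: eq_card => y; apply/imsetP/idP => [[x xA ->]|yB]; first exact: fAB.
by exists (g y); [apply: gBA | rewrite gK].
Qed.

Lemma card_dep_pairs (T1 T2 : finType) (A : {set T1}) (F : T1 -> {set T2}) :
  #|[set X : T1 * T2 | (X.1 \in A) && (X.2 \in F X.1)]| = \sum_(x in A) #|F x|.
Proof.
rewrite -sum1dep_card -(pair_big_dep (mem A) (fun x y => y \in F x) (fun _ _ => 1)).
by apply: eq_bigr => x _; rewrite sum1dep_card cardsE.
Qed.

Definition point n (v : nat) : 'I_(2 * n.+1) := insubd (Ordinal (isT : 0 < 2 * n.+1)) v.

Lemma pointE n v : v < 2 * n.+1 -> (point n v : nat) = v.
Proof. by move=> lt_v; rewrite /point val_insubd lt_v. Qed.

Lemma card_relabel_add_arc n (S : {set arc n}) (S' : {set arc n.+1}) f g s t :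
  injective f -> injective g -> (forall u, f u <> s) ->
  (forall a b, has_arc S' a b <->
     (a = s /\ b = t) \/ exists u v, [/\ a = f u, b = g v & has_arc S u v]) ->
  #|S'| = #|S|.+1.
Proof.
move=> inj_f inj_g neq_fs S'P.
have S'st : has_arc S' s t by apply/S'P; left.
have [lt_s lt_t] := has_arc_lt S'st.
have lt_fg (p : arc n) : p \in S -> f p.1 < 2 * n.+1 /\ g p.2 < 2 * n.+1.
  by move=> pS; apply/has_arc_lt/S'P; right; exists p.1, p.2; rewrite has_arc_mem.
pose relabel (p : arc n) : arc n.+1 := (point n (f p.1), point n (g p.2)).
have -> : S' = (point n s, point n t) |: [set relabel p | p in S].
  apply: eq_arc_set => a b; apply/idP/has_arcP.
    case/S'P => [[-> ->]|[u [v [-> -> /has_arcP [p pS [<- <-]]]]]].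
      by exists (point n s, point n t); rewrite ?setU11 /= ?pointE.
    have [lt_fp lt_gp] := lt_fg p pS.
    by exists (relabel p); rewrite ?setU1r ?imset_f //= !pointE.
  case=> q; rewrite !inE => /orP [/eqP -> [<- <-]|/imsetP [p pS ->] [<- <-]].
    by apply/S'P; left; rewrite !pointE.
  have [lt_fp lt_gp] := lt_fg p pS.
  by apply/S'P; right; exists p.1, p.2; rewrite /= !pointE // has_arc_mem.
rewrite cardsU1 card_in_imset => [|p q pS qS [e1 e2]].
  suff -> : (point n s, point n t) \notin [set relabel p | p in S] by [].
  apply/imsetP => -[p pS [/(congr1 val)]]; have [lt_fp _] := lt_fg p pS.
  by rewrite /= !pointE // => /esym /neq_fs.
have [lt_fp lt_gp] := lt_fg p pS; have [lt_fq lt_gq] := lt_fg q qS.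
apply: arc_eq; [apply: inj_f; move/(congr1 val): e1 | apply: inj_g; move/(congr1 val): e2];
  by rewrite /= !pointE.
Qed.

Lemma card_ins_arc n (M : {set arc n}) s t : s < t -> t < 2 * n.+1 ->
  #|ins_arc M s t| = #|M|.+1.
Proof.
move=> lt_st t_lt; apply: card_relabel_add_arc (ins_arcP lt_st t_lt M);
  [exact: bump2_inj | exact: bump2_inj | exact: bump2_neqs].
Qed.

Definition matchings n := [set M : {set arc n} | is_matching M].

Lemma arc0_set0 (M : {set arc 0}) : M = set0.
Proof. by apply/setP => -[[x lt_x] y]; exfalso; move: lt_x; rewrite muln0. Qed.

Lemma card_matchings0 : #|matchings 0| = 1.
Proof.
apply/eqP/cards1P; exists set0; apply/setP => M; rewrite !inE (arc0_set0 M) eqxx.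
by apply/andP; split; apply/forallP => -[[] //]; rewrite muln0.
Qed.

(* Junk value 0 when no arc starts at 0. *)
Definition partner0 n (M : {set arc n}) : nat :=
  if [pick p in M | (p.1 : nat) == 0] is Some p then p.2 else 0.

Lemma has_arc_partner0 n (M : {set arc n.+1}) :
  matching_rel n.+1 (has_arc M) -> has_arc M 0 (partner0 M).
Proof.
case=> Mlt Mcover _ _ _.
have [y /orP [M0y|/Mlt//]] := Mcover 0 isT.
rewrite /partner0; case: pickP => [p /andP [pM /eqP p0]|none].
  by apply/has_arcP; exists p.
by case/has_arcP: M0y => p pM [p0 _]; move: (none p); rewrite pM p0.
Qed.

Lemma partner0_lt n (M : {set arc n.+1}) :
  matching_rel n.+1 (has_arc M) -> 0 < partner0 M < 2 * n.+1.
Proof. by move=> HM; apply: rel_lt HM _ _ (has_arc_partner0 HM). Qed.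

Lemma card_matching_rel n (M : {set arc n}) : matching_rel n (has_arc M) -> #|M| = n.
Proof.
elim: n M => [|n IH] M HM; first by rewrite (arc0_set0 M) cards0.
have M0 := has_arc_partner0 HM; have /andP [p_gt0 p_lt] := partner0_lt HM.
by rewrite -(ins_del_arc p_gt0 p_lt HM M0) card_ins_arc // IH //; apply: del_arc_matching.
Qed.

Lemma card_matchings_succ n : #|matchings n.+1| = (2 * n).+1 * #|matchings n|.
Proof.
(* A matching of size n+1 is a matching of size n plus the partner t+1 of 0. *)
rewrite [RHS]mulnC -[(2 * n).+1]card_ord -cardsT -cardsX; symmetry.
apply: (@card_in_bij _ _ _ _ (fun X : {set arc n} * 'I_(2 * n).+1 => ins_arc X.1 0 X.2.+1)
          (fun M => (del_arc M 0 (partner0 M), inord (partner0 M).-1))).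
- move=> [M t]; rewrite !inE ?andbT => /is_matchingP HM; apply/is_matchingP.
  by apply: ins_arc_matching => //=; have := ltn_ord t; lia.
- move=> M; rewrite !inE ?andbT => /is_matchingP HM; apply/is_matchingP.
  by apply: del_arc_matching (has_arc_partner0 HM); case/andP: (partner0_lt HM).
- move=> [M t]; rewrite !inE ?andbT => /is_matchingP HM /=.
  have t_lt : t.+1 < 2 * n.+1 by have := ltn_ord t; lia.
  have HM' := ins_arc_matching (ltn0Sn t) t_lt HM.
  have -> : partner0 (ins_arc M 0 t.+1) = t.+1.
    apply: rel_uniql HM' _ _ _ (has_arc_partner0 HM' ) _.
    by apply/(ins_arcP (ltn0Sn t) t_lt); left.
  by rewrite del_ins_arc //; congr pair; apply: val_inj; rewrite /= inordK.
- move=> M; rewrite !inE ?andbT => /is_matchingP HM /=.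
  have /andP [p_gt0 p_lt] := partner0_lt HM.
  by rewrite inordK ?prednK ?ins_del_arc ?has_arc_partner0 //; lia.
Qed.

Definition occ_set n (M : {set arc n}) : {set arc n} :=
  [set q : arc n | has_arc M q.1 q.2.+1 && has_arc M q.1.+1 q.2].

Lemma has_arc_occ n (M : {set arc n}) a b :
  has_arc (occ_set M) a b = has_arc M a b.+1 && has_arc M a.+1 b.
Proof.
rewrite (@has_arc_set n (fun a b => has_arc M a b.+1 && has_arc M a.+1 b)).
case Mab: (has_arc M a b.+1) => //=.
by case Mab': (has_arc M a.+1 b) => //=; have [-> /ltnW ->] := has_arc_lt Mab.
Qed.

Section NestArc.
Variables (n x y : nat) (M : {set arc n}).
Hypotheses (HM : matching_rel n (has_arc M)) (Mxy : has_arc M x y).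

Let lt_xy : x < y < 2 * n.
Proof. exact: rel_lt HM _ _ Mxy. Qed.
Let lt_st : x.+1 < y.+1.
Proof. by case/andP: lt_xy. Qed.
Let t_lt : y.+1 < 2 * n.+1.
Proof. by case/andP: lt_xy => *; lia. Qed.

Local Notation bmp := (bump2 x.+1 y.+1).
Local Notation M' := (ins_arc M x.+1 y.+1).

Let bmp_gt0 i : 0 < bmp i.+1.
Proof. exact: leq_trans (leq_bump2 lt_st i.+1). Qed.

Lemma has_arc_ins_outer u v : has_arc M u v -> 0 < u ->
  has_arc M' (bmp u).-1 (bmp v).+1 = has_arc M u.-1 v.+1.
Proof.
case: HM => Mlt _ Muniql Muniqr Mdisj Muv u_gt0.
have /andP [lt_uv lt_v] := Mlt _ _ Muv.
have neq_vx : v <> x by move=> evx; subst v; exact: Mdisj Mxy Muv.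
have neq_uy : u <> y by move=> euy; subst u; exact: Mdisj Muv Mxy.
have insP := ins_arcP lt_st t_lt M.
case: (u =P x.+1) => [eux|neq_ux].
  subst u; have -> : (bmp x.+1).-1 = x.+1 by rewrite /bump2 /bump; lia.
  apply/idP/idP => [/insP [[_ e]|[u' [_ [e _ _]]]]|/(Muniql _ _ _ Mxy) e].
  - by rewrite (_ : v.+1 = y) //; move: e; rewrite /bump2 /bump; lia.
  - by case: (bump2_neqs lt_st (esym e)).
  - by apply/insP; left; split => //; rewrite /bump2 /bump; lia.
have -> : (bmp u).-1 = bmp u.-1 by rewrite /bump2 /bump; lia.
case: (v.+1 =P y) => [evy|neq_vy].
  have -> : (bmp v).+1 = y.+1 by rewrite /bump2 /bump; lia.
  rewrite evy; apply/idP/idP => [/insP [[e _]|[u' [v' [_ e _]]]]|/(Muniqr _ _ _ Mxy) e].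
  - by case: (bump2_neqs lt_st e).
  - by case: (bump2_neqt lt_st (esym e)).
  - by exfalso; lia.
have -> : (bmp v).+1 = bmp v.+1 by rewrite /bump2 /bump; lia.
exact: has_arc_ins_bump2.
Qed.

Lemma occ_insP a b :
  has_arc (occ_set M') a b <->
  (a = x /\ b = y.+1) \/
  exists i j, [/\ a = (bmp i.+1).-1, b = bmp j & has_arc (occ_set M) i j].
Proof.
have insP := ins_arcP lt_st t_lt M.
rewrite has_arc_occ; split.
- case/andP => Mout /insP [[ea ->]|[u [v [ea eb Muv]]]].
    by left; split => //; case: ea.
  have u_gt0 : 0 < u.
    by case: u ea {Muv} => // /esym; rewrite /bump2 /bump /=; lia.
  right; exists u.-1, v; rewrite has_arc_occ prednK // -ea /= Muv andbT.
  by split => //; rewrite -(has_arc_ins_outer Muv u_gt0) -ea -eb.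
- case=> [[-> ->]|[i [j [-> -> /[!has_arc_occ] /andP [Mout Min]]]]].
    have -> : has_arc M' x y.+2 = has_arc M x y.
      by rewrite -(has_arc_ins_bump2 lt_st t_lt); congr has_arc; rewrite /bump2 /bump; lia.
    by rewrite Mxy; apply/insP; left.
  rewrite prednK ?bmp_gt0 // has_arc_ins_bump2 // Min andbT.
  by rewrite (has_arc_ins_outer Min).
Qed.

Lemma card_occ_ins : #|occ_set M'| = #|occ_set M|.+1.
Proof.
apply: card_relabel_add_arc occ_insP.
- move=> i j /(congr1 S); rewrite !prednK ?bmp_gt0 //.
  by move/(bump2_inj lt_st)/succn_inj.
- exact: bump2_inj lt_st.
- by move=> i /(congr1 S); rewrite prednK ?bmp_gt0 //; apply: bump2_neqs.
Qed.

End NestArc.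

Lemma occ21E n (M : {set arc n}) : occ21 M = #|occ_set M|.
Proof. by []. Qed.

Section DelOccurrence.
Variables (n i j : nat) (M : {set arc n.+1}).
Hypotheses (HM : matching_rel n.+1 (has_arc M))
  (Mout : has_arc M i j.+1) (Min : has_arc M i.+1 j).

Let lt_ij : i.+1 < j < 2 * n.+1.
Proof. exact: rel_lt HM _ _ Min. Qed.

Lemma has_arc_del_occ : has_arc (del_arc M i.+1 j) i j.-1.
Proof.
case/andP: lt_ij => lt_ij' lt_j; rewrite has_arc_del //.
have -> : bump2 i.+1 j i = i by rewrite /bump2 /bump; lia.
by have -> : bump2 i.+1 j j.-1 = j.+1 by rewrite /bump2 /bump; lia.
Qed.

Lemma ins_del_occ : ins_arc (del_arc M i.+1 j) i.+1 j.-1.+1 = M.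
Proof. by case/andP: lt_ij => *; rewrite prednK ?ins_del_arc //; lia. Qed.

Lemma card_occ_del : #|occ_set (del_arc M i.+1 j)|.+1 = #|occ_set M|.
Proof.
case/andP: lt_ij => lt_ij' lt_j.
rewrite -(card_occ_ins _ has_arc_del_occ) ?ins_del_occ //.
exact: del_arc_matching.
Qed.

End DelOccurrence.

Definition occ_matchings n k := [set M : {set arc n} | is_matching M && (occ21 M == k)].

Lemma a_nk_succ m k : k.+1 * a_nk m.+2 k.+1 = m.+1 * a_nk m.+1 k.
Proof.
pose marked_occ := [set X : {set arc m.+2} * arc m.+2 |
  (X.1 \in occ_matchings m.+2 k.+1) && (X.2 \in occ_set X.1)].
pose marked_arc := [set Y : {set arc m.+1} * arc m.+1 |
  (Y.1 \in occ_matchings m.+1 k) && (Y.2 \in Y.1)].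
have -> : k.+1 * a_nk m.+2 k.+1 = #|marked_occ|.
  rewrite card_dep_pairs mulnC -sum_nat_const; apply: eq_bigr => M.
  by rewrite inE => /andP [_ /eqP <-].
have -> : m.+1 * a_nk m.+1 k = #|marked_arc|.
  rewrite (card_dep_pairs _ (fun M => M)) mulnC -sum_nat_const; apply: eq_bigr => M.
  by rewrite inE => /andP [/is_matchingP /card_matching_rel ->].
(* Deleting the inner arc (i+1, j) of a marked occurrence (i, j) leaves the
   marked arc (i, j-1). *)
apply: (@card_in_bij _ _ _ _
  (fun X : {set arc m.+2} * arc m.+2 =>
     (del_arc X.1 X.2.1.+1 X.2.2, (point m X.2.1, point m X.2.2.-1)))
  (fun Y : {set arc m.+1} * arc m.+1 =>
     (ins_arc Y.1 Y.2.1.+1 Y.2.2.+1, (point m.+1 Y.2.1, point m.+1 Y.2.2.+1)))).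
- move=> [M [i j]]; rewrite !inE /= => /and3P [/andP [/is_matchingP HM /eqP occM] Mout Min].
  have /andP [lt_ij lt_j] := rel_lt HM Min.
  have Mdel := has_arc_del_occ HM Mout Min; have [lt_i' lt_j'] := has_arc_lt Mdel.
  rewrite /del_arc_rel !pointE // -has_arc_del // Mdel andbT; apply/andP; split.
    by apply/is_matchingP; apply: del_arc_matching.
  by rewrite -eqSS -occM !occ21E card_occ_del.
- move=> [M [i j]]; rewrite !inE /= => /andP [/andP [/is_matchingP HM /eqP occM] ijM].
  have Mij : has_arc M i j by rewrite (has_arc_mem M (i, j)).
  have /andP [lt_ij lt_j] := rel_lt HM Mij.
  rewrite !pointE; try lia.
  rewrite -has_arc_occ; apply/andP; split; last by apply/(occ_insP HM Mij); left.
  apply/andP; split; first by apply/is_matchingP; apply: ins_arc_matching => //; lia.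
  by rewrite occ21E (card_occ_ins HM Mij) -occ21E occM.
- move=> [M [i j]]; rewrite !inE /= => /and3P [/andP [/is_matchingP HM _] Mout Min].
  have /andP [lt_ij _] := rel_lt HM Min; have [_ lt_j] := has_arc_lt Mout.
  rewrite !pointE; try lia.
  by rewrite ins_del_occ //; congr (_, _); apply: arc_eq; rewrite /= pointE //; lia.
- move=> [M [i j]]; rewrite !inE /= => /andP [/andP [/is_matchingP HM _] ijM].
  have Mij : has_arc M i j by rewrite (has_arc_mem M (i, j)).
  have /andP [lt_ij lt_j] := rel_lt HM Mij.
  rewrite !pointE; try lia.
  by rewrite del_ins_arc; [congr (_, _); apply: arc_eq; rewrite /= pointE | ..]; lia.
Qed.

Lemma a_nk_binom m k : a_nk (m.+1 + k) k = 'C(m + k, k) * a_nk m.+1 0.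
Proof.
elim: k => [|k IH]; first by rewrite !addn0 bin0 mul1n.
apply/eqP; rewrite -(eqn_pmul2l (ltn0Sn k)) addnS -addSn a_nk_succ -addSn IH.
by rewrite !mulnA (_ : m + k = (m.+1 + k).-1) // mul_bin_diag addSn addnS.
Qed.

Lemma a1_succ k : a_nk 1 k.+1 = 0.
Proof.
apply/eqP; rewrite cards_eq0; apply/eqP/setP => M; rewrite !inE.
apply/negbTE/negP => /andP [/is_matchingP HM]; rewrite occ21E => /eqP occM.
have /set0Pn [[i j]] : occ_set M != set0 by rewrite -card_gt0 occM.
by rewrite -has_arc_mem has_arc_occ => /andP [_ /(rel_lt HM)]; lia.
Qed.

Lemma a_nk_large m r : a_nk m.+1 (m.+1 + r) = 0.
Proof.
elim: m r => [|m IH] r; first exact: a1_succ.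
have := a_nk_succ m (m.+1 + r); rewrite IH muln0 => /eqP.
by rewrite muln_eq0 /= -addSn => /eqP.
Qed.

Lemma occ21_le m (M : {set arc m.+1}) : is_matching M -> occ21 M <= m.
Proof.
move=> HM; rewrite leqNgt; apply/negP => lt_m.
have : 0 < a_nk m.+1 (occ21 M).
  by apply/card_gt0P; exists M; rewrite inE HM eqxx.
by rewrite -(subnKC lt_m) a_nk_large.
Qed.

Lemma card_matchings_sum m : #|matchings m.+1| = \sum_(k < m.+1) a_nk m.+1 k.
Proof.
rewrite -sum1_card (partition_big (fun M => inord (occ21 M) : 'I_m.+1) predT) //=.
apply: eq_bigr => k _; rewrite sum1dep_card; apply: eq_card => M; rewrite !inE.
case HM: (is_matching M) => //=.
by rewrite -val_eqE /= inordK // ltnS occ21_le.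
Qed.

Lemma card_matchings_binom m :
  #|matchings m.+1| = \sum_(j < m.+1) 'C(m, j) * a_nk j.+1 0.
Proof.
rewrite card_matchings_sum (reindex_inj rev_ord_inj); apply: eq_bigr => j _ /=.
have le_jm : j <= m by rewrite -ltnS.
by have := a_nk_binom j (m - j); rewrite subSS addSn !subnKC // bin_sub.
Qed.

Section BinomialTransform.
Variables e U : nat -> nat.
Hypothesis U_binom : forall m, U m = \sum_(j < m.+1) 'C(m, j) * e j.

Lemma binom_sum_shift n : \sum_(j < n.+1) 'C(n, j) * e j.+1 + U n = U n.+1.
Proof.
rewrite !U_binom [\sum_(j < n.+2) _]big_ord_recl [\sum_(j < n.+1) 'C(n, j) * e j]big_ord_recl.
have -> : \sum_(i < n.+1) 'C(n.+1, lift ord0 i) * e (lift ord0 i) =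
    \sum_(i < n.+1) 'C(n, i) * e i.+1 + \sum_(i < n) 'C(n, i.+1) * e i.+1.
  rewrite [X in _ = _ + X](_ : _ = \sum_(i < n.+1) 'C(n, i.+1) * e i.+1).
    by rewrite -big_split; apply: eq_bigr => j _; rewrite /= binS mulnDl addnC.
  by rewrite big_ord_recr /= bin_small // mul0n addn0.
have -> : \sum_(i < n) 'C(n, lift ord0 i) * e (lift ord0 i) =
    \sum_(i < n) 'C(n, i.+1) * e i.+1 by [].
rewrite !bin0 !mul1n; lia.
Qed.


Lemma binom_sum_index n :
  \sum_(j < n.+2) 'C(n.+1, j) * j * e j = n.+1 * \sum_(j < n.+1) 'C(n, j) * e j.+1.
Proof.
rewrite big_ord_recl /= muln0 mul0n add0n big_distrr; apply: eq_bigr => j _ /=.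
rewrite (_ : bump 0 j = j.+1) // mulnA (mul_bin_diag n.+1 j); lia.
Qed.

Lemma binom_sum_index_pred n :
  \sum_(j < n.+2) 'C(n.+1, j) * j * e j.-1 = n.+1 * U n.
Proof.
rewrite U_binom big_ord_recl /= muln0 mul0n add0n big_distrr; apply: eq_bigr => j _ /=.
rewrite (_ : bump 0 j = j.+1) // mulnA (mul_bin_diag n.+1 j) add0n; lia.
Qed.

Hypothesis U_succ : forall m, U m.+1 = (2 * m + 3) * U m.

Lemma binom_transform_rec n : e n.+1 = (2 * n + 2) * e n + 2 * n * e n.-1.
Proof.
(* Both sides have the same binomial transform; conclude by strong induction. *)
pose g j := (2 * j + 2) * e j + 2 * j * e j.-1.
elim/ltn_ind: n => n IH; rewrite -/(g n).
have shift_U m : \sum_(j < m.+1) 'C(m, j) * e j.+1 = (2 * m + 2) * U m.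
  by have := binom_sum_shift m; rewrite U_succ; lia.
have sum_g : \sum_(j < n.+1) 'C(n, j) * e j.+1 = \sum_(j < n.+1) 'C(n, j) * g j.
  have -> : \sum_(j < n.+1) 'C(n, j) * g j = 2 * (\sum_(j < n.+1) 'C(n, j) * j * e j)
      + 2 * U n + 2 * (\sum_(j < n.+1) 'C(n, j) * j * e j.-1).
    rewrite U_binom !big_distrr -!big_split; apply: eq_bigr => j _ /=; rewrite /g; lia.
  rewrite shift_U; case: n {IH} => [|m].
    by rewrite !big_ord_recl !big_ord0 /=; lia.
  by rewrite binom_sum_index binom_sum_index_pred shift_U U_succ; nia.
move: sum_g; rewrite !big_ord_recr /= binn !mul1n.
by rewrite (eq_bigr (fun j : 'I_n => 'C(n, j) * g j)) => [|j _]; [lia | rewrite IH].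
Qed.

End BinomialTransform.

Lemma a1_0 : a_nk 1 0 = 1.
Proof.
have := card_matchings_binom 0; rewrite big_ord1 bin0 mul1n => <-.
by rewrite card_matchings_succ card_matchings0.
Qed.

Lemma a_nk0_rec p : a_nk p.+2 0 = (2 * p + 2) * a_nk p.+1 0 + 2 * p * a_nk p 0.
Proof.
have U_succ m : #|matchings m.+2| = (2 * m + 3) * #|matchings m.+1|.
  by rewrite card_matchings_succ; congr (_ * _); lia.
have := @binom_transform_rec (fun j => a_nk j.+1 0) _ card_matchings_binom U_succ p.
by case: p => [|p]; rewrite ?muln0 ?mul0n.
Qed.

Lemma a_nk0_bounds p :
  0 < a_nk p.+1 0 /\ 2 * p.+1 * a_nk p.+1 0 <= a_nk p.+2 0 <= (2 * p + 3) * a_nk p.+1 0.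
Proof.
elim: p => [|p [IH_gt0 /andP [IH_lo IH_hi]]]; first by rewrite a_nk0_rec a1_0.
rewrite (a_nk0_rec p.+1); split; first by nia.
by apply/andP; split; nia.
Qed.

Lemma a_nk_ratio_bounds k p :
  [/\ 0 < a_nk (p + k.+2) k.+1, 2 * k.+1 * a_nk (p + k.+2) k.+1 <= a_nk (p + k.+2) k
    & p.+1 * a_nk (p + k.+2) k <= (p.+1 * (2 * k.+1) + k.+1) * a_nk (p + k.+2) k.+1].
Proof.
have -> : p + k.+2 = p.+2 + k by lia.
set q := p.+1 + k.
have -> : a_nk (p.+2 + k) k.+1 = 'C(q, k.+1) * a_nk p.+1 0.
  by rewrite addSnnS a_nk_binom /q addSn addnS.
rewrite a_nk_binom -/q.
have binC : k.+1 * 'C(q, k.+1) = p.+1 * 'C(q, k).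
  by rewrite mul_bin_left /q (_ : p.+1 + k - k = p.+1) //; lia.
have [e_gt0 /andP [e_lo e_hi]] := a_nk0_bounds p.
have C_gt0 : 0 < 'C(q, k.+1) by rewrite bin_gt0 /q; lia.
split; first by rewrite muln_gt0 C_gt0.
- by move: (leq_mul (leqnn 'C(q, k)) e_lo); nia.
- by move: (leq_mul (leqnn (p.+1 * 'C(q, k))) e_hi); nia.
Qed.

Lemma Un_cv_nat_ratio (A B : nat -> nat) (c d N : nat) :
  (forall p, [/\ 0 < B (p + N), c * B (p + N) <= A (p + N)
               & p.+1 * A (p + N) <= (p.+1 * c + d) * B (p + N)]) ->
  Un_cv (fun n => INR (A n) / INR (B n))%R (INR c).
Proof.
move=> ratio_bounds eps eps_gt0.
have [p0 p0_big] := INR_archimed eps (INR d) eps_gt0.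
exists (p0 + N) => n /leP le_n; rewrite /Rdist.
have [p le_p0p ->] : exists2 p, p0 <= p & n = p + N by exists (n - N); lia.
have [B_gt0 /leP/le_INR lo /leP/le_INR hi] := ratio_bounds p.
move: lo hi; rewrite !mult_INR plus_INR mult_INR.
set a := INR (A _); set b := INR (B _); set q := INR p.+1 => lo hi.
have b_gt0 : (0 < b)%R by apply/lt_0_INR/ltP.
have q_gt0 : (0 < q)%R by apply: lt_0_INR; lia.
have q_eps : (INR p0 * eps <= q * eps)%R.
  by apply: Rmult_le_compat_r; [lra | apply/le_INR/leP; apply: leqW].
have ratio_lo : (INR c <= a / b)%R.
  by apply: (Rmult_le_reg_r b) => //; rewrite /Rdiv Rmult_assoc Rinv_l; lra.
have ratio_hi : (q * (a / b - INR c) <= INR d)%R.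
  apply: (Rmult_le_reg_r b) => //.
  by rewrite Rmult_assoc Rmult_minus_distr_r /Rdiv Rmult_assoc Rinv_l; lra.
rewrite Rabs_pos_eq; nra.
Qed.

Theorem corollary5 (k : nat) :
  Un_cv (fun n : nat => (INR (a_nk n k) / INR (a_nk n k.+1))%R)
        (2 * INR k.+1)%R.
Proof.
have -> : (2 * INR k.+1)%R = INR (2 * k.+1) by rewrite mult_INR /=; lra.
apply: (@Un_cv_nat_ratio _ _ _ k.+1 k.+2) => p.
exact: a_nk_ratio_bounds.
Qed.
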